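(* Let $n_1,\dots,n_k$ be nonnegative integers and $N=n_1+\dots+n_k$. Then \[ \mathcal{L}^{(t)}_T\Big(\prod_{i=1}^{k}T^{(t)}_{n_i}(x)\Big) \] equals the number of subsets $S$ (the ''marked'' vertices) of the vertex set of $C_{n_1}\sqcup\dots\sqcup C_{n_k}$ with $|S|=N/(t+1)$ (the count is $0$ if $N/(t+1)$ is not an integer) such that for every marked vertex $j$ in a cycle $C_{n_i}$, the $t$ vertices $j+1,j+2,\dots,j+t$ (indices mod $n_i$) are not all unmarked.
   Context: Fix an integer $t\ge1$. For $n\ge1$ let $C_n$ be the $n$-cycle with vertices $1,\dots,n$ (indices mod $n$); $C_0$ is empty. If $n\ge t+1$, the $t$-paths in $C_n$ are the $n$ sequences $(i,i+1,\dots,i+t)$ mod $n$, $i=1,\dots,n$; if $n\le t$ there are none. Define $T^{(t)}_n(x)=\sum_F(-1)^{|F|}x^{\,n-(t+1)|F|}$ over all families $F$ of $t$-paths in $C_n$ with pairwise disjoint vertex sets, $T^{(t)}_0=1$. Let $\mathcal{L}^{(t)}_T$ be the linear functional on polynomials with $\mathcal{L}^{(t)}_T(x^{(t+1)j})=\binom{(t+1)j}{j}$ for $j\ge0$ and $\mathcal{L}^{(t)}_T(x^m)=0$ if $t+1\nmid m$. *)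

From HB Require Import structures.
From mathcomp Require Import all_boot all_order all_algebra.
Set Implicit Arguments. Unset Strict Implicit. Unset Printing Implicit Defensive.
Import Order.TTheory GRing.Theory Num.Theory.
Local Open Scope ring_scope.

(* Vertices of C_n are 'I_n (vertex v+1 of the paper is v here).
   The t-path starting at i has vertex set { (i + s) mod n | 0 <= s <= t }. *)
Definition tpath_vert (t n : nat) (i : 'I_n) : {set 'I_n} :=
  [set j : 'I_n | [exists s : 'I_t.+1, ((i + s) %% n)%N == j]].

(* A family of t-paths (indexed by starting points F) with pairwise disjoint
   vertex sets; t-paths exist only if n >= t+1. *)
Definition disj_family (t n : nat) (F : {set 'I_n}) : bool :=
  (F == set0) ||
  ((t < n)%N &&
   [forall a in F, forall b in F,
      (a != b) ==> [disjoint (@tpath_vert t n a) & (@tpath_vert t n b)]]).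

Definition Tpoly (t n : nat) : {poly int} :=
  \sum_(F : {set 'I_n} | @disj_family t n F)
     ((-1) ^+ #|F|) *: 'X^(n - t.+1 * #|F|).

Definition LT (t : nat) (p : {poly int}) : int :=
  \sum_(m < size p)
     p`_m * (if (t.+1 %| m)%N then ('C(m, m %/ t.+1))%:Z else 0).

Definition good_marking (t k : nat) (n : 'I_k -> nat)
    (S : {set {i : 'I_k & 'I_(n i)}}) : bool :=
  [forall v in S,
     [exists j' : 'I_(n (tag v)),
        [exists s : 'I_t.+1,
           [&& (0 < s)%N, (((tagged v) + s) %% n (tag v))%N == j'
             & Tagged (fun i => 'I_(n i)) j' \in S]]]].

(* Let V be the disjoint union of the cycles, N = |V|, and call a marked vertex of a
   marking S "bad" when none of its t successors is marked.
   1. Expanding the product, T_{n_1} ... T_{n_k} = Σ_F (-1)^|F| x^(N - (t+1)|F|), where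
      F ranges over the families of pairwise disjoint t-paths of V, each path being
      identified with its starting vertex.
   2. If N = (t+1)M, then L_T(x^(N - (t+1)|F|)) = C((t+1)(M-|F|), M-|F|) counts the
      (M-|F|)-subsets of the vertices not covered by F.  Adding the starting points F to
      such a subset is a bijection onto the M-markings S all of whose vertices in F are
      bad.  If t+1 does not divide N, every term and the count itself are 0.
   3. Any set of bad vertices of S is a disjoint family, so exchanging the summations
      each M-marking S contributes Σ_{F ⊆ bad(S)} (-1)^|F| = [bad(S) = ∅]: exactly the
      good markings are counted. *)

From HB Require Import structures.
From mathcomp Require Import all_boot all_order all_algebra.
Set Implicit Arguments. Unset Strict Implicit. Unset Printing Implicit Defensive.
Import GRing.Theory.

Lemma sum_sign_subsets (R : pzRingType) (T : finType) (A : {set T}) :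
  (\sum_(F : {set T} | F \subset A) (-1) ^+ #|F| = (A == set0)%:R :> R)%R.
Proof.
have [->|[a aA]] := set_0Vmem A.
  rewrite eqxx (eq_bigl (pred1 set0)) => [|F]; last by rewrite /= subset0.
  by rewrite big_pred1_eq cards0 expr0.
have -> : (A == set0) = false by apply/negbTE/set0Pn; exists a.
(* Toggling a is a sign-reversing involution: pair G (a ∉ G) with a |: G. *)
rewrite (bigID (fun F : {set T} => a \in F)) /=.
rewrite (reindex_onto (fun G => a |: G) (fun F => F :\ a)) /=; last first.
  by move=> F /andP [_ aF]; rewrite setD1K.
rewrite -[RHS](subrr (\sum_(F : {set T} | (F \subset A) && (a \notin F)) (-1) ^+ #|F|)%R).
rewrite -sumrN addrC; congr (_ + _)%R; apply: eq_big => G.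
  rewrite setU11 andbT subUset sub1set aA /=.
  case aG: (a \in G); last by rewrite setU1K ?aG // eqxx ?andbT.
  by rewrite andbF; apply/andP => -[_ /eqP E]; move: aG; rewrite -E !inE eqxx.
move=> /andP [_ /eqP E]; have aG : a \notin G by rewrite -E !inE eqxx.
by rewrite cardsU1 aG exprD expr1 mulN1r.
Qed.

Section LinearFunctional.
Variable t : nat.

Definition wT (m : nat) : int :=
  if (t.+1 %| m)%N then Posz 'C(m, m %/ t.+1) else 0%R.

Lemma LT_ext (p : {poly int}) (m : nat) : (size p <= m)%N ->
  LT t p = (\sum_(j < m) p`_j * wT j)%R.
Proof.
move=> le; rewrite /LT (big_ord_widen _ (fun j => p`_j * wT j)%R le) big_mkcond.
apply: eq_bigr => i _; case: ltnP => // h.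
by rewrite nth_default ?mul0r.
Qed.

Lemma LT_add (p q : {poly int}) : LT t (p + q)%R = (LT t p + LT t q)%R.
Proof.
set m := maxn (size p) (size q).
rewrite (@LT_ext _ m) ?size_polyD // (@LT_ext p m) ?leq_maxl // (@LT_ext q m) ?leq_maxr //.
by rewrite -big_split; apply: eq_bigr => i _; rewrite coefD mulrDl.
Qed.

Lemma LT0 : LT t 0%R = 0%R.
Proof. by rewrite /LT size_poly0 big_ord0. Qed.

Lemma LT_sum (I : Type) (r : seq I) (P : pred I) (F : I -> {poly int}) :
  LT t (\sum_(i <- r | P i) F i)%R = (\sum_(i <- r | P i) LT t (F i))%R.
Proof. exact: (big_morph (LT t) LT_add LT0). Qed.

Lemma LT_monom (c : int) (e : nat) : LT t (c *: 'X^e)%R = (c * wT e)%R.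
Proof.
rewrite (@LT_ext _ e.+1); last by rewrite -(size_polyXn int e) size_scale_leq.
rewrite big_ord_recr /= big1 ?add0r => [|i _]; first by rewrite coefZ coefXn eqxx mulr1.
by rewrite coefZ coefXn (ltn_eqF (ltn_ord i)) mulr0 mul0r.
Qed.

End LinearFunctional.

Section Cycles.
Variables (t k : nat) (n : 'I_k -> nat).

Local Notation V := {i : 'I_k & 'I_(n i)}.
Local Notation Ntot := (\sum_(i < k) n i)%N.

Lemma n_gt0 (v : V) : (0 < n (tag v))%N.
Proof. by case: v => i [x hx] /=; apply: leq_ltn_trans hx. Qed.

Definition vshift (v : V) (s : nat) : V :=
  Tagged (fun i => 'I_(n i)) (Ordinal (ltn_pmod (tagged v + s) (n_gt0 v))).

Lemma vertex_eq (u v : V) :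
  tag u = tag v -> val (tagged u) = val (tagged v) -> u = v.
Proof. by case: u => i x; case: v => j y /= Eij; subst j => /val_inj ->. Qed.

Lemma vshift0 (v : V) : vshift v 0 = v.
Proof. by apply: vertex_eq => //=; rewrite addn0 modn_small. Qed.

Lemma vshift_meet (a b : V) (s s' : nat) :
  vshift a s = vshift b s' -> (s' <= s)%N -> b = vshift a (s - s').
Proof.
case: a => i x; case: b => j y E le.
have Eij : j = i by have := congr1 tag E.
subst j; have /= Exy := congr1 (fun w : V => val (tagged w)) E.
apply: vertex_eq => //=; apply/eqP; rewrite -(modn_small (ltn_ord y)) eq_sym.
by rewrite -(eqn_modDr s') -addnA subnK //; apply/eqP.
Qed.

Lemma vshift_inj (a : V) (s s' : nat) :
  (s < n (tag a))%N -> (s' < n (tag a))%N -> vshift a s = vshift a s' -> s = s'.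
Proof.
move=> hs hs' /(congr1 (fun w : V => val (tagged w))) /= /eqP.
by rewrite eqn_modDl !modn_small // => /eqP.
Qed.

Lemma vshift_neq (a : V) (s : nat) :
  (0 < s)%N -> (s < n (tag a))%N -> vshift a s != a.
Proof.
move=> s0 sn; apply/eqP => E.
have /vshift_inj : vshift a s = vshift a 0 by rewrite vshift0.
by move=> /(_ sn (n_gt0 a)) s_eq0; rewrite s_eq0 in s0.
Qed.

Definition pathV (v : V) : {set V} := [set vshift v s | s : 'I_t.+1].

Lemma mem_pathV (a : V) (s : nat) : (s <= t)%N -> vshift a s \in pathV a.
Proof. by move=> st; apply: (imset_f _ (_ : Ordinal (st : (s < t.+1)%N) \in _)). Qed.

Definition disjV (F : {set V}) : bool :=
  [forall a in F, (t < n (tag a))%N] &&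
  [forall a in F, forall b in F, (a != b) ==> [disjoint pathV a & pathV b]].

Lemma disjVP (F : {set V}) : reflect
  ((forall a, a \in F -> (t < n (tag a))%N) /\
   (forall a b, a \in F -> b \in F -> a != b -> [disjoint pathV a & pathV b]))
  (disjV F).
Proof.
apply: (iffP andP) => [[/forall_inP H1 /forall_inP H2]|[H1 H2]]; split => //.
- by move=> a b /H2 /forall_inP H2a /H2a /implyP.
- exact/forall_inP.
- by apply/forall_inP => a aF; apply/forall_inP => b bF; apply/implyP; apply: H2.
Qed.

Lemma disjV_sub (H F : {set V}) : H \subset F -> disjV F -> disjV H.
Proof.
move=> /subsetP sub /disjVP [H1 H2]; apply/disjVP.
by split=> [a /sub|a b /sub aF /sub bF]; [apply: H1 | apply: H2].
Qed.

Definition cover (F : {set V}) : {set V} :=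
  (fun p : V * 'I_t.+1 => vshift p.1 p.2) @: setX F [set: 'I_t.+1].

Lemma coverP (F : {set V}) (x : V) :
  reflect (exists a, exists s : 'I_t.+1, a \in F /\ x = vshift a s) (x \in cover F).
Proof.
apply: (iffP imsetP) => [[[a s]]|[a [s [aF ->]]]].
  by rewrite !inE /= => /andP [aF _] ->; exists a, s.
by exists (a, s) => //; rewrite !inE aF.
Qed.

Lemma sub_cover (F : {set V}) : F \subset cover F.
Proof. by apply/subsetP => a aF; apply/coverP; exists a, ord0; rewrite vshift0. Qed.

Lemma disj_notin (F : {set V}) (a : V) (s : nat) :
  disjV F -> a \in F -> (0 < s)%N -> (s <= t)%N -> vshift a s \notin F.
Proof.
move=> /disjVP [H1 H2] aF s0 st; apply/negP => bF.
have ne : a != vshift a s by rewrite eq_sym vshift_neq // (leq_ltn_trans st (H1 a aF)).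
have := H2 _ _ aF bF ne; move/disjointFr => /(_ _ (mem_pathV a st)).
by have := mem_pathV (vshift a s) (leq0n t); rewrite vshift0 => ->.
Qed.

Lemma card_cover (F : {set V}) : disjV F -> #|cover F| = (#|F| * t.+1)%N.
Proof.
move=> /disjVP [H1 H2]; rewrite card_in_imset ?cardsX ?cardsT ?card_ord //.
move=> [a s] [b s']; rewrite !inE /= !andbT => aF bF E.
have [eab|nab] := eqVneq a b.
  subst b; congr (_, _); apply: val_inj.
  by apply: (vshift_inj (leq_ltn_trans _ (H1 a aF)) (leq_ltn_trans _ (H1 a aF)) E);
    rewrite -ltnS.
have := H2 _ _ aF bF nab; move/disjointFr => /(_ _ (mem_pathV a (ltn_ord s))).
by rewrite E (mem_pathV b (ltn_ord s')).
Qed.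

Definition bad (S : {set V}) (v : V) : bool :=
  [forall s : 'I_t.+1, (0 < s)%N ==> (vshift v s \notin S)].
Definition badset (S : {set V}) : {set V} := [set v in S | bad S v].

Lemma good_markingE (S : {set V}) : @good_marking t k n S = (badset S == set0).
Proof.
apply/forall_inP/eqP => [G|E v vS].
- apply/setP => v; rewrite !inE; apply/negbTE/andP => -[vS /forallP B].
  have /existsP [j' /existsP [s /and3P [s0 /eqP Ej jS]]] := G v vS.
  move/implyP: (B s) => /(_ s0); apply/negP/negPn.
  by rewrite (_ : vshift v s = Tagged (fun i => 'I_(n i)) j') //; apply: vertex_eq.
- have : v \notin badset S by rewrite E in_set0.
  rewrite inE vS /= => /forallPn [s]; rewrite negb_imply negbK => /andP [s0 sS].
  apply/existsP; exists (tagged (vshift v s)); apply/existsP; exists s.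
  by rewrite s0 /= eqxx.
Qed.

Lemma bad_meet (S : {set V}) (a b : V) (s s' : nat) : bad S a -> b \in S -> a != b ->
  vshift a s = vshift b s' -> (s' <= s)%N -> (s <= t)%N -> False.
Proof.
move=> /forallP B bS ab E le st; have Hb := vshift_meet E le.
have [z|pos] := posnP (s - s'); first by move: ab; rewrite Hb z vshift0 eqxx.
have lt : (s - s' < t.+1)%N by apply: leq_ltn_trans (leq_subr s' s) _.
by move/implyP: (B (Ordinal lt)) => /(_ pos); rewrite /= -Hb bS.
Qed.

Lemma bad_disj (S F : {set V}) : F \subset badset S -> disjV F.
Proof.
move=> /subsetP sub; apply/disjVP; split.
  move=> a /sub; rewrite inE => /andP [aS /forallP B].
  rewrite ltnNge; apply/negP => le.
  have lt : (n (tag a) < t.+1)%N by [].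
  move/implyP: (B (Ordinal lt)) => /(_ (n_gt0 a)).
  rewrite (_ : vshift a _ = a) ?aS //.
  by apply: vertex_eq => //=; rewrite modnDr modn_small.
move=> a b aF bF ab.
move: (sub _ aF) (sub _ bF); rewrite !inE => /andP [aS Ba] /andP [bS Bb].
rewrite -setI_eq0; apply/eqP/setP => x; rewrite !inE.
apply/negbTE/andP => -[/imsetP [s _ Ex] /imsetP [s' _ Ex']]; rewrite Ex in Ex'.
have [le|lt] := leqP s' s; first by apply: (bad_meet Ba bS ab Ex' le); rewrite -ltnS.
by apply: (bad_meet Bb aS _ (esym Ex') (ltnW lt)); rewrite 1?eq_sym // -ltnS.
Qed.

Definition tg (i : 'I_k) (x : 'I_(n i)) : V := Tagged (fun j => 'I_(n j)) x.

Lemma tg_inj (i : 'I_k) : injective (@tg i).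
Proof. by move=> x y /eqP; rewrite eq_Tagged /= => /eqP. Qed.

Lemma pathV_tg (i : 'I_k) (a : 'I_(n i)) :
  pathV (tg a) = @tg i @: @tpath_vert t (n i) a.
Proof.
apply/setP => w; apply/imsetP/imsetP => [[s _ ->]|[j]].
  by exists (tagged (vshift (tg a) s)) => //; rewrite inE; apply/existsP; exists s.
rewrite inE => /existsP [s /eqP Es] ->.
by exists s => //; apply: vertex_eq => //=; rewrite Es.
Qed.

Lemma disjoint_tg (i : 'I_k) (A B : {set 'I_(n i)}) :
  [disjoint @tg i @: A & @tg i @: B] = [disjoint A & B].
Proof. by rewrite -!setI_eq0 -imsetI ?imset_eq0 // => x y _ _; apply: tg_inj. Qed.

Lemma disjV_tg (i : 'I_k) (G : {set 'I_(n i)}) : disjV (@tg i @: G) = disj_family t G.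
Proof.
rewrite /disj_family; have [->|[a0 a0G]] := set_0Vmem G.
  by rewrite eqxx imset0; apply/disjVP; split=> a; rewrite in_set0.
have -> : (G == set0) = false by apply/negbTE/set0Pn; exists a0.
apply/disjVP/andP => [[H1 H2]|[H1 /forall_inP H2]]; split.
- exact: (H1 _ (imset_f _ a0G)).
- apply/forall_inP => a aG; apply/forall_inP => b bG; apply/implyP => ab.
  move: (H2 _ _ (imset_f (@tg i) aG) (imset_f (@tg i) bG)).
  rewrite !pathV_tg disjoint_tg; apply.
  by apply: contra ab => /eqP /tg_inj ->.
- by move=> a /imsetP [x _ ->].
- move=> a b /imsetP [x xG ->] /imsetP [y yG ->] xy.
  move/forall_inP/(_ y yG)/implyP: (H2 x xG).
  by rewrite !pathV_tg disjoint_tg; apply; apply: contra xy => /eqP ->.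
Qed.

Definition fibS (i : 'I_k) (H : {set V}) : bool := [forall v in H, tag v == i].

Lemma TpolyV (i : 'I_k) : Tpoly t (n i) =
  (\sum_(H : {set V} | fibS i H && disjV H) (-1) ^+ #|H| *: 'X^(n i - t.+1 * #|H|))%R.
Proof.
rewrite (reindex_onto (fun G : {set 'I_(n i)} => @tg i @: G)
   (fun H : {set V} => [set j | tg j \in H])) /=; last first.
  move=> H /andP [/forall_inP fH _]; apply/setP => v; apply/imsetP/idP.
    by move=> [j]; rewrite inE => jH ->.
  move=> vH; have /eqP := fH v vH.
  by case: v vH => j x /= vH Eji; subst j; exists x; rewrite ?inE.
apply: eq_big => [G|G _]; last by rewrite card_imset //; apply: tg_inj.
rewrite disjV_tg.
have -> : fibS i (@tg i @: G) by apply/forall_inP => v /imsetP [x _ ->].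
suff -> : [set j | tg j \in @tg i @: G] == G by rewrite andbT.
apply/eqP/setP => x; rewrite inE; apply/imsetP/idP => [[y yG /tg_inj ->] //|xG].
by exists x.
Qed.

Definition fib (i : 'I_k) (F : {set V}) : {set V} := [set v in F | tag v == i].

Lemma card_fibT (i : 'I_k) : #|[set v : V | tag v == i]| = n i.
Proof.
have -> : [set v : V | tag v == i] = @tg i @: [set: 'I_(n i)].
  apply/setP => v; rewrite inE; apply/idP/imsetP => [|[x _ ->] //].
  by case: v => j x /= /eqP Eji; subst j; exists x; rewrite ?in_setT.
by rewrite card_imset ?cardsT ?card_ord //; apply: tg_inj.
Qed.

Lemma card_fib_sum (F : {set V}) : #|F| = \sum_(i < k) #|fib i F|.
Proof.
rewrite -sum1_card (partition_big (fun v : V => tag v) predT) //.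
by apply: eq_bigr => i _; rewrite -sum1_card; apply: eq_bigl => v; rewrite inE.
Qed.

Lemma cardV : #|[set: V]| = Ntot.
Proof.
rewrite card_fib_sum; apply: eq_bigr => i _; rewrite -card_fibT.
by apply: eq_card => v; rewrite !inE.
Qed.

Lemma cover_bound (F : {set V}) : disjV F -> (#|F| * t.+1 <= Ntot)%N.
Proof. by move=> D; rewrite -card_cover // -cardV subset_leq_card // subsetT. Qed.

Lemma fib_bound (F : {set V}) (i : 'I_k) : disjV F -> (t.+1 * #|fib i F| <= n i)%N.
Proof.
move=> D; have Df : disjV (fib i F).
  by apply: disjV_sub D; apply/subsetP => v; rewrite inE => /andP [].
rewrite mulnC -card_cover // -card_fibT; apply: subset_leq_card.
by apply/subsetP => x /coverP [a [s [aF ->]]]; move: aF; rewrite !inE => /andP [_].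
Qed.

Lemma prod_fib_monomials (F : {set V}) : disjV F ->
  (\prod_(i < k) ((-1) ^+ #|fib i F| *: 'X^(n i - t.+1 * #|fib i F|))
   = (-1) ^+ #|F| *: 'X^(Ntot - t.+1 * #|F|) :> {poly int})%R.
Proof.
move=> D; under eq_bigr do rewrite -mul_polyC.
rewrite big_split /= -(rmorph_prod (@polyC int)) !prodrXr -card_fib_sum mul_polyC.
congr ((_ *: 'X^_)%R).
by rewrite sumnB => [|i _]; [rewrite -big_distrr -card_fib_sum | apply: fib_bound].
Qed.

Lemma family_disjV (f : {ffun 'I_k -> {set V}}) :
  (f \in family (fun i H => fibS i H && disjV H)) =
  disjV (\bigcup_(i < k) f i) && ([ffun i => fib i (\bigcup_(i < k) f i)] == f).
Proof.
apply/familyP/andP => [Hf|[D /eqP E] i]; last first.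
  rewrite -E ffunE; apply/andP; split.
    by apply/forall_inP => v; rewrite inE => /andP [].
  by apply: disjV_sub D; apply/subsetP => v; rewrite inE => /andP [].
have Ft i v : v \in f i -> tag v = i.
  by case/andP: (Hf i) => /forall_inP fi _ /fi /eqP.
have eqf : [ffun i => fib i (\bigcup_(i < k) f i)] = f.
  apply/ffunP => i; rewrite ffunE; apply/setP => v; rewrite inE.
  apply/andP/idP => [[/bigcupP [j _ vj] /eqP <-]|vi]; first by rewrite (Ft j v vj).
  by split; [apply/bigcupP; exists i | rewrite (Ft i v vi)].
split; last by rewrite eqf.
apply/disjVP; split.
  by move=> a /bigcupP [j _ aj]; case/andP: (Hf j) => _ /disjVP [H1 _]; apply: H1.
move=> a b /bigcupP [j _ aj] /bigcupP [j' _ bj'] ab.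
have [ejj|ne] := eqVneq j j'.
  by subst j'; case/andP: (Hf j) => _ /disjVP [_]; apply.
rewrite -setI_eq0; apply/eqP/setP => x; rewrite !inE.
apply/negbTE/andP => -[/imsetP [s _ Ex] /imsetP [s' _ Ex']].
have := congr1 tag Ex'; rewrite Ex /= (Ft _ _ aj) (Ft _ _ bj') => E.
by move: ne; rewrite E eqxx.
Qed.

Lemma prod_Tpoly : (\prod_(i < k) Tpoly t (n i) =
  \sum_(F : {set V} | disjV F) (-1) ^+ #|F| *: 'X^(Ntot - t.+1 * #|F|))%R.
Proof.
rewrite (eq_bigr _ (fun i _ => TpolyV i)) bigA_distr_big_dep /=.
rewrite [RHS](reindex_onto (fun f : {ffun 'I_k -> {set V}} => \bigcup_(i < k) f i)
   (fun F => [ffun i => fib i F])) /=; last first.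
  move=> F _; apply/setP => v; apply/bigcupP/idP => [[i _]|vF].
    by rewrite ffunE inE => /andP [].
  by exists (tag v) => //; rewrite ffunE inE vF eqxx.
apply: eq_big => f; first exact: family_disjV.
rewrite family_disjV => /andP [D /eqP E].
have Ef i : f i = fib i (\bigcup_(i < k) f i) by rewrite -[in LHS]E ffunE.
under eq_bigr do rewrite Ef.
exact: prod_fib_monomials.
Qed.

Lemma LT_prod_Tpoly : LT t (\prod_(i < k) Tpoly t (n i)) =
  (\sum_(F : {set V} | disjV F) (-1) ^+ #|F| * wT t (Ntot - t.+1 * #|F|))%R.
Proof. by rewrite prod_Tpoly LT_sum; apply: eq_bigr => F _; rewrite LT_monom. Qed.

Lemma weight_nondvd (F : {set V}) :
  ~~ (t.+1 %| Ntot)%N -> disjV F -> wT t (Ntot - t.+1 * #|F|) = 0%R.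
Proof.
move=> ndvd D; rewrite /wT ifF //; apply: contraNF ndvd => dvd.
have le : (t.+1 * #|F| <= Ntot)%N by rewrite mulnC cover_bound.
by rewrite -(subnK le) dvdn_add // dvdn_mulr.
Qed.

Lemma weight_draws (M : nat) (F : {set V}) : Ntot = (M * t.+1)%N -> disjV F ->
  wT t (Ntot - t.+1 * #|F|) =
  Posz #|[set S' : {set V} | S' \subset ~: cover F & #|S'| == M - #|F|]|.
Proof.
move=> NM D.
have E : (Ntot - t.+1 * #|F| = (M - #|F|) * t.+1)%N by rewrite NM mulnBl [(t.+1 * _)%N]mulnC.
have cC : #|~: cover F| = ((M - #|F|) * t.+1)%N.
  by rewrite cardsCs setCK card_cover // -cardsT cardV NM mulnBl.
by rewrite /wT E dvdn_mull // mulnK // cards_draws cC.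
Qed.

(* S ↦ S \ F identifies the M-markings whose bad set contains F with the
   (M-|F|)-sets avoiding the vertices covered by F. *)
Lemma remove_starts_pred (M : nat) (F S : {set V}) : disjV F -> (#|F| <= M)%N ->
  [&& S :\: F \subset ~: cover F, #|S :\: F| == M - #|F| & (S :\: F) :|: F == S]
  = (#|S| == M) && (F \subset badset S).
Proof.
move=> D fM; apply/and3P/andP => [[sub /eqP cd /eqP E]|[/eqP cS sub]].
- have FS : F \subset S by rewrite -E subsetUr.
  have cS : #|S| = M by rewrite -(cardsID F S) (setIidPr FS) cd subnKC.
  split; first by rewrite cS.
  apply/subsetP => a aF; rewrite inE (subsetP FS a aF) /=.
  apply/forallP => s; apply/implyP => s0; apply/negP => inS.
  have [inF|notinF] := boolP (vshift a s \in F).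
    by move: inF; rewrite (negbTE (disj_notin D aF s0 _)) // -ltnS.
  have /(subsetP sub) : vshift a s \in S :\: F by rewrite inE notinF inS.
  by rewrite inE => /negP; apply; apply/coverP; exists a, s.
- have FS : F \subset S.
    by apply: subset_trans sub _; apply/subsetP => v; rewrite inE => /andP [].
  split.
  + apply/subsetP => x; rewrite !inE => /andP [xF xS]; apply/negP => /coverP [a [s [aF Ex]]].
    move: (subsetP sub a aF); rewrite inE => /andP [_ /forallP B].
    have [s0|s0] := posnP s; first by move: xF; rewrite Ex s0 vshift0 aF.
    by move/implyP: (B s) => /(_ s0); rewrite -Ex xS.
  + by rewrite -cS -(cardsID F S) (setIidPr FS) addKn.
  + by rewrite setUC -{1}(setIidPr FS) setID.
Qed.

Lemma card_remove_starts (M : nat) (F : {set V}) : disjV F -> (#|F| <= M)%N ->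
  #|[set S' : {set V} | S' \subset ~: cover F & #|S'| == M - #|F|]| =
  #|[set S : {set V} | (#|S| == M) && (F \subset badset S)]|.
Proof.
move=> D fM; rewrite -[LHS]sum1_card -[RHS]sum1_card.
rewrite (reindex_onto (fun S => S :\: F) (fun S' => S' :|: F)) /=.
  by apply: eq_bigl => S; rewrite !inE -andbA remove_starts_pred.
move=> S'; rewrite inE => /andP [sub _]; apply/setP => x; rewrite !inE.
have [xS|] := boolP (x \in S'); last by rewrite andNb.
rewrite andbT; apply/negP => xF.
by have := subsetP sub x xS; rewrite inE (subsetP (sub_cover F) x xF).
Qed.

Lemma signed_count_bad (M : nat) :
  (\sum_(F : {set V} | disjV F)
      (-1) ^+ #|F| * Posz #|[set S : {set V} | (#|S| == M) && (F \subset badset S)]|)%R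
  = Posz #|[set S : {set V} | (#|S| == M) && (badset S == set0)]|.
Proof.
under eq_bigr => F _ do rewrite -natz -[X in X%:R%R]sum1_card natr_sum mulr_sumr.
rewrite -[RHS]natz -[in RHS]sum1_card natr_sum.
rewrite (exchange_big_dep (fun S : {set V} => #|S| == M)) /=;
  last by move=> F S _; rewrite !inE => /andP [].
rewrite big_mkcond [RHS]big_mkcond; apply: eq_bigr => S _; rewrite inE.
case: eqP => //= SM; transitivity ((badset S == set0)%:R : int)%R; last by case: eqP.
rewrite -sum_sign_subsets; apply: eq_big => [F|F _]; last exact: mulr1.
rewrite inE SM eqxx /=; apply/andP/idP => [[] //|FS].
by split=> //; apply: bad_disj FS.
Qed.

End Cycles.

Local Open Scope ring_scope.

Theorem mainTheorem7 (t : nat) (ht : (1 <= t)%N) (k : nat) (n : 'I_k -> nat) :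
  LT t (\prod_(i < k) Tpoly t (n i)) =
  (#|[set S : {set {i : 'I_k & 'I_(n i)}} |
        (#|S| * t.+1 == \sum_(i < k) n i)%N && @good_marking t k n S]|)%:Z.
Proof.
(* The identity holds for every t. *)
rewrite LT_prod_Tpoly.
have [/dvdnP [M NM]|ndvd] := boolP (t.+1 %| \sum_(i < k) n i)%N; last first.
  (* Both sides vanish: no subset has (t+1)|S| = N. *)
  rewrite big1 => [|F D]; last by rewrite weight_nondvd ?mulr0.
  rewrite eq_card0 // => S; rewrite !inE.
  by apply/negbTE; apply: contra ndvd => /andP [/eqP <- _]; rewrite dvdn_mull.
under eq_bigr => F D.
  have fM : (#|F| <= M)%N by rewrite -(@leq_pmul2r t.+1) // -NM cover_bound.
  rewrite (weight_draws NM D) (card_remove_starts D fM).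
over.
rewrite signed_count_bad; congr Posz; apply: eq_card => S.
by rewrite !inE good_markingE NM eqn_pmul2r.
Qed.
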